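(* Let $\alpha,\beta>0$, let $n\ge 1$ be an integer, and let $f\in\mathcal{H}_\alpha(M)$ and $V\in\mathcal{H}_\beta(M)$. For $0\le i\le n-1$ set $W_i=V(\tfrac{i}{n})+V(\tfrac{i+1}{n})$ and $\delta_i=f(\tfrac{i+1}{n})-f(\tfrac{i}{n})$, let $\bar W_n=\frac1n\sum_{i=0}^{n-1}W_i$, $\overline{\delta^2_n}=\frac1n\sum_{i=0}^{n-1}\delta_i^2$, and $$T=\frac1n\sum_{i=0}^{n-1}\left(W_i+\delta_i^2-\bar W_n-\overline{\delta^2_n}\right)^2 .$$ Then, with $\bar V=\int_0^1V(x)\,dx$ and $\mathbf 1$ the constant function equal to one on $[0,1]$, $$\|V-\bar V\mathbf 1\|_2^2\lesssim T+n^{-2(\beta\wedge 1)}+n^{-4(\alpha\wedge1)},$$ where the implicit constant does not depend on $n$, $f$ or $V$.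
   Context: For $\alpha,M>0$, the Hölder class $\mathcal{H}_\alpha(M)$ is the set of functions $g:[0,1]\to\mathbb{R}$ such that $|g^{(\lfloor\alpha\rfloor)}(x)-g^{(\lfloor\alpha\rfloor)}(y)|\le M|x-y|^{\alpha-\lfloor\alpha\rfloor}$ for all $x,y\in[0,1]$ and $\|g^{(k)}\|_\infty\le M$ for all $k\in\{0,\dots,\lfloor\alpha\rfloor\}$. $M$ is a fixed, sufficiently large constant. $a\lesssim b$ means $a\le Cb$ for a constant $C$ which may depend on $\alpha,\beta,M$ only. $\|\cdot\|_2$ is the $L^2([0,1])$ norm; $a\wedge b=\min\{a,b\}$. *)

From Stdlib Require Import Reals Lra.
From Coquelicot Require Import Coquelicot.
Open Scope R_scope.

Definition nfloor (a : R) : nat := Z.to_nat (Int_part a).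

(* Hoelder class H_a(M) on [0,1].  g is given on R; only its behaviour on
   [0,1] matters (derivatives of order < floor a exist at each point of [0,1],
   derivatives of order <= floor a are bounded by M on [0,1], and the
   floor(a)-th derivative is (a - floor a)-Hoelder with constant M on [0,1]). *)
Definition holder (a M : R) (g : R -> R) : Prop :=
  let m := nfloor a in
  (forall k x, (k < m)%nat -> 0 <= x <= 1 -> ex_derive (Derive_n g k) x) /\
  (forall k x, (k <= m)%nat -> 0 <= x <= 1 -> Rabs (Derive_n g k x) <= M) /\
  (forall x y, 0 <= x <= 1 -> 0 <= y <= 1 ->
     Rabs (Derive_n g m x - Derive_n g m y) <= M * Rpower (Rabs (x - y)) (a - INR m)).

Definition W_i (n : nat) (V : R -> R) (i : nat) : R :=
  V (INR i / INR n) + V (INR (S i) / INR n).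

Definition delta_i (n : nat) (f : R -> R) (i : nat) : R :=
  f (INR (S i) / INR n) - f (INR i / INR n).

Definition avg (n : nat) (u : nat -> R) : R :=
  / INR n * sum_f_R0 u (Nat.pred n).

Definition T_stat (n : nat) (f V : R -> R) : R :=
  let Wbar := avg n (W_i n V) in
  let d2bar := avg n (fun i => (delta_i n f i) ^ 2) in
  avg n (fun i => (W_i n V i + (delta_i n f i) ^ 2 - Wbar - d2bar) ^ 2).

(** The proof compares [V] with the constant [W̄/2].  On the cell
    [[i/n, (i+1)/n]], the Hölder bound puts [V x] within [M n^(-(β∧1))] of
    both endpoint values, hence of [W_i/2], so
    [(V x - W̄/2)^2 <= (W_i - W̄)^2/2 + 2 M^2 n^(-2(β∧1))].  Since the squared
    increments [δ_i^2] and their mean both lie in [[0, M^2 n^(-2(α∧1))]],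
    replacing [W_i - W̄] by [W_i + δ_i^2 - W̄ - mean(δ^2)] costs at most
    [M^4 n^(-4(α∧1))].  Integrating cell by cell and using that [∫ V] minimises
    [c ↦ ∫ (V - c)^2] gives the claim with [C = 1 + 2M^2 + M^4]. *)

From Pilot Require Import Defs.
From Stdlib Require Import Reals Lra Lia.
From Coquelicot Require Import Coquelicot.
Open Scope R_scope.

Lemma nfloor_lt1 a : (0 < a < 1) -> Defs.nfloor a = 0%nat.
Proof.
  intros Ha. unfold Defs.nfloor. destruct (base_Int_part a) as [H1 H2].
  assert (Z1 : (Int_part a < 1)%Z) by (apply lt_IZR; simpl; lra).
  assert (Z2 : (-1 < Int_part a)%Z) by (apply lt_IZR; simpl; lra).
  lia.
Qed.

Lemma nfloor_ge1 a : 1 <= a -> (1 <= Defs.nfloor a)%nat.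
Proof.
  intros Ha. unfold Defs.nfloor. destruct (base_Int_part a) as [H1 H2].
  assert (Z1 : (0 < Int_part a)%Z) by (apply lt_IZR; simpl; lra).
  lia.
Qed.

Lemma mul_Rpower_opp_pow M x r k :
  (M * Rpower x (- r)) ^ k = M ^ k * Rpower x (- (INR k * r)).
Proof.
  rewrite Rpow_mult_distr, <- (Rpower_pow k (Rpower x (- r))) by apply exp_pos.
  rewrite Rpower_mult. do 2 f_equal. ring.
Qed.

Lemma holder_lipschitz a M g : 1 <= a -> holder a M g ->
  forall x y, 0 <= x <= 1 -> 0 <= y <= 1 -> Rabs (g x - g y) <= M * Rabs (x - y).
Proof.
  intros Ha [Hd [Hb _]] x y Hx Hy.
  pose proof (nfloor_ge1 a Ha) as Hm.
  assert (Hin : forall z, Rmin x y <= z <= Rmax x y -> 0 <= z <= 1).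
  { intros z Hz. unfold Rmin, Rmax in Hz. destruct Rle_dec; lra. }
  assert (Hg : forall z, Rmin x y <= z <= Rmax x y -> ex_derive g z).
  { intros z Hz. exact (Hd 0%nat z ltac:(lia) (Hin z Hz)). }
  destruct (MVT_gen g x y (Derive g)) as [c [Hc Heq]].
  - intros z Hz. apply Derive_correct, Hg. lra.
  - intros z Hz. apply continuity_pt_filterlim.
    apply (@ex_derive_continuous R_AbsRing R_NormedModule), Hg, Hz.
  - rewrite <- Rabs_Ropp, Ropp_minus_distr, Heq, Rabs_mult, (Rabs_minus_sym x y).
    apply Rmult_le_compat_r; [apply Rabs_pos|].
    exact (Hb 1%nat c Hm (Hin c Hc)).
Qed.

Lemma holder_modulus a M g : 0 < a -> 0 <= M -> holder a M g ->
  forall t x y, 0 < t -> 0 <= x <= 1 -> 0 <= y <= 1 -> Rabs (x - y) <= t ->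
  Rabs (g x - g y) <= M * Rpower t (Rmin a 1).
Proof.
  intros Ha HM Hg t x y Ht Hx Hy Hxy.
  destruct (Rlt_le_dec a 1) as [Ha1 | Ha1].
  - destruct Hg as [_ [_ Hh]]. cbv zeta in Hh.
    rewrite nfloor_lt1, Rminus_0_r in Hh by lra. simpl in Hh.
    rewrite Rmin_left by lra.
    (* [Rpower 0 _ = 1], so the case [x = y] cannot go through monotonicity. *)
    destruct (Req_dec x y) as [<- | Hne].
    + rewrite Rminus_diag, Rabs_R0.
      apply Rmult_le_pos; [lra | left; apply exp_pos].
    + eapply Rle_trans; [exact (Hh x y Hx Hy) |].
      apply Rmult_le_compat_l; [lra |].
      apply Rle_Rpower_l; [lra |]. split; [apply Rabs_pos_lt; lra | exact Hxy].
  - rewrite Rmin_right, Rpower_1 by lra.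
    eapply Rle_trans; [exact (holder_lipschitz a M g Ha1 Hg x y Hx Hy) |].
    apply Rmult_le_compat_l; lra.
Qed.

Lemma holder_grid_modulus a M g n : 0 < a -> 0 <= M -> holder a M g -> (1 <= n)%nat ->
  forall x y, 0 <= x <= 1 -> 0 <= y <= 1 -> Rabs (x - y) <= / INR n ->
  Rabs (g x - g y) <= M * Rpower (INR n) (- Rmin a 1).
Proof.
  intros Ha HM Hg Hn x y Hx Hy Hxy.
  assert (HN : 0 < INR n) by (apply lt_0_INR; lia).
  replace (Rpower (INR n) (- Rmin a 1)) with (Rpower (/ INR n) (Rmin a 1)).
  - apply (holder_modulus a M g); auto. now apply Rinv_0_lt_compat.
  - unfold Rpower. rewrite ln_Rinv by exact HN. f_equal; ring.
Qed.

(** [holder] says nothing about [g] outside [[0,1]]; precomposing with the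
    retraction [clamp01] yields a function continuous on all of [R], as the
    integration lemmas require. *)
Definition clamp01 (x : R) : R := Rmax 0 (Rmin 1 x).

Lemma clamp01_range x : 0 <= clamp01 x <= 1.
Proof. unfold clamp01, Rmax, Rmin. repeat destruct Rle_dec; lra. Qed.

Lemma clamp01_id x : 0 <= x <= 1 -> clamp01 x = x.
Proof. intros H. unfold clamp01, Rmax, Rmin. repeat destruct Rle_dec; lra. Qed.

Lemma clamp01_lipschitz x y : Rabs (clamp01 x - clamp01 y) <= Rabs (x - y).
Proof.
  unfold clamp01, Rmax, Rmin, Rabs.
  repeat destruct Rle_dec; repeat destruct Rcase_abs; lra.
Qed.

Lemma holder_clamp01_continuity a M g : 0 < a -> 0 < M -> holder a M g ->
  continuity (fun x => g (clamp01 x)).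
Proof.
  intros Ha HM Hg x eps Heps.
  assert (Hr : 0 < Rmin a 1) by (apply Rmin_glb_lt; lra).
  set (d := Rpower (eps / (2 * M)) (/ Rmin a 1)).
  assert (Hd : 0 < d) by apply exp_pos.
  exists d; split; [exact Hd |]. intros y [_ Hy]. simpl in *. unfold Rdist in *.
  eapply Rle_lt_trans.
  - apply (holder_modulus a M g Ha (Rlt_le _ _ HM) Hg d);
      try apply clamp01_range; [exact Hd |].
    eapply Rle_trans; [apply clamp01_lipschitz | lra].
  - unfold d. rewrite Rpower_mult, Rinv_l, Rpower_1 by (try apply Rdiv_lt_0_compat; lra).
    field_simplify; lra.
Qed.

Lemma ex_RInt_continuity f a b : continuity f -> ex_RInt f a b.
Proof.
  intros Hf. apply (@ex_RInt_continuous R_CompleteNormedModule).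
  intros z _. apply continuity_pt_filterlim, Hf.
Qed.

Lemma continuity_sqr_sub h c : continuity h -> continuity (fun x => (h x - c) ^ 2).
Proof.
  intros Hh x. apply (continuity_pt_ext (fun x => (h x - c) * (h x - c))); [intros; ring |].
  apply continuity_pt_mult; apply continuity_pt_minus; trivial;
    apply continuity_pt_const; intros ? ?; reflexivity.
Qed.

Lemma RInt_affine h a b : ex_RInt h 0 1 ->
  RInt (fun x => a * h x + b) 0 1 = a * RInt h 0 1 + b.
Proof.
  intros Hh.
  assert (Hscal : RInt (fun x => a * h x) 0 1 = a * RInt h 0 1)
    by exact (RInt_scal h 0 1 a Hh).
  assert (Hconst : RInt (fun _ => b) 0 1 = (1 - 0) * b) by exact (RInt_const 0 1 b).
  rewrite (RInt_plus (fun x => a * h x) (fun _ => b));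
    [| exact (ex_RInt_scal h 0 1 a Hh) | apply ex_RInt_const].
  change (RInt (fun x => a * h x) 0 1 + RInt (fun _ => b) 0 1 = a * RInt h 0 1 + b).
  rewrite Hscal, Hconst. ring.
Qed.

Lemma RInt_sqr_sub_mean_le h c : continuity h ->
  RInt (fun x => (h x - RInt h 0 1) ^ 2) 0 1 <= RInt (fun x => (h x - c) ^ 2) 0 1.
Proof.
  intros Hh. set (m := RInt h 0 1).
  assert (Hint : ex_RInt h 0 1) by now apply ex_RInt_continuity.
  set (lin := fun x => 2 * (m - c) * h x + (c ^ 2 - m ^ 2)).
  assert (Hlin : RInt lin 0 1 = (m - c) ^ 2 :> R).
  { unfold lin. rewrite RInt_affine by exact Hint. fold m. ring. }
  assert (Hsplit : RInt (fun x => (h x - m) ^ 2 + lin x) 0 1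
                   = RInt (fun x => (h x - m) ^ 2) 0 1 + RInt lin 0 1).
  { exact (RInt_plus _ _ 0 1 (ex_RInt_continuity _ 0 1 (continuity_sqr_sub h m Hh))
             (ex_RInt_plus _ _ 0 1 (ex_RInt_scal h 0 1 _ Hint) (ex_RInt_const 0 1 _))). }
  rewrite (RInt_ext (fun x => (h x - c) ^ 2) (fun x => (h x - m) ^ 2 + lin x))
    by (intros x _; unfold lin; simpl; ring).
  rewrite Hsplit, Hlin. pose proof (pow2_ge_0 (m - c)). lra.
Qed.

Lemma RInt_sqr_sub_mean_ext g h : (forall x, 0 <= x <= 1 -> g x = h x) ->
  RInt (fun x => (g x - RInt g 0 1) ^ 2) 0 1 = RInt (fun x => (h x - RInt h 0 1) ^ 2) 0 1.
Proof.
  intros Hgh.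
  assert (Hin : forall x, Rmin 0 1 < x < Rmax 0 1 -> 0 <= x <= 1).
  { intros x. rewrite Rmin_left, Rmax_right by lra. lra. }
  assert (Hmean : RInt g 0 1 = RInt h 0 1).
  { apply RInt_ext. intros x Hx. now apply Hgh, Hin. }
  rewrite Hmean. apply RInt_ext. intros x Hx. simpl. now rewrite (Hgh x (Hin x Hx)).
Qed.

Lemma grid_cell n i : (1 <= n)%nat -> (i <= pred n)%nat ->
  0 <= INR i / INR n /\ INR (S i) / INR n <= 1 /\
  INR (S i) / INR n - INR i / INR n = / INR n.
Proof.
  intros Hn Hi. assert (HN : 0 < INR n) by (apply lt_0_INR; lia).
  assert (HSi : INR (S i) <= INR n) by (apply le_INR; lia).
  pose proof (pos_INR i).
  split; [| split].
  - apply Rmult_le_pos; [lra | left; now apply Rinv_0_lt_compat].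
  - apply (Rmult_le_reg_r (INR n)); [exact HN |].
    unfold Rdiv. rewrite Rmult_assoc, Rinv_l; lra.
  - rewrite S_INR. field. lra.
Qed.

Lemma RInt_grid_sum g n : continuity g -> (1 <= n)%nat ->
  RInt g 0 1 = sum_f_R0 (fun i => RInt g (INR i / INR n) (INR (S i) / INR n)) (pred n).
Proof.
  intros Hg Hn.
  assert (HN : 0 < INR n) by (apply lt_0_INR; lia).
  assert (Hpartial : forall k, RInt g 0 (INR (S k) / INR n) =
     sum_f_R0 (fun i => RInt g (INR i / INR n) (INR (S i) / INR n)) k).
  { induction k as [| k IH].
    - simpl. f_equal. unfold Rdiv. ring.
    - change (sum_f_R0 ?F (S k)) with (sum_f_R0 F k + F (S k)). rewrite <- IH. symmetry.
      exact (RInt_Chasles g 0 (INR (S k) / INR n) (INR (S (S k)) / INR n)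
               (ex_RInt_continuity _ _ _ Hg) (ex_RInt_continuity _ _ _ Hg)). }
  rewrite <- Hpartial. replace (S (pred n)) with n by lia.
  f_equal. field. lra.
Qed.

Lemma RInt_le_const g a b K : continuity g -> a <= b ->
  (forall x, a < x < b -> g x <= K) -> RInt g a b <= (b - a) * K.
Proof.
  intros Hg Hab HK.
  assert (HKint : RInt (fun _ => K) a b = (b - a) * K) by exact (RInt_const a b K).
  rewrite <- HKint.
  apply RInt_le; auto using ex_RInt_continuity.
  apply ex_RInt_const.
Qed.

Lemma avg_le n u v : (1 <= n)%nat -> (forall i, (i <= pred n)%nat -> u i <= v i) ->
  avg n u <= avg n v.
Proof.
  intros Hn H. unfold avg. apply Rmult_le_compat_l.
  - left. apply Rinv_0_lt_compat, lt_0_INR. lia.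
  - now apply sum_Rle.
Qed.

Lemma avg_const n k : (1 <= n)%nat -> avg n (fun _ => k) = k.
Proof.
  intros Hn. unfold avg. rewrite sum_cte. replace (S (pred n)) with n by lia.
  field. apply not_0_INR. lia.
Qed.

Lemma avg_plus_const n u k : (1 <= n)%nat -> avg n (fun i => u i + k) = avg n u + k.
Proof.
  intros Hn. unfold avg. rewrite plus_sum, Rmult_plus_distr_l. f_equal.
  exact (avg_const n k Hn).
Qed.

Lemma avg_bounds n u lo hi : (1 <= n)%nat ->
  (forall i, (i <= pred n)%nat -> lo <= u i <= hi) -> lo <= avg n u <= hi.
Proof.
  intros Hn H. rewrite <- (avg_const n lo Hn), <- (avg_const n hi Hn) at 1.
  split; apply avg_le; firstorder.
Qed.

Lemma RInt_le_avg g n K : continuity g -> (1 <= n)%nat ->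
  (forall i x, (i <= pred n)%nat -> INR i / INR n < x < INR (S i) / INR n -> g x <= K i) ->
  RInt g 0 1 <= avg n K.
Proof.
  intros Hg Hn HK. rewrite (RInt_grid_sum g n Hg Hn). unfold avg. rewrite scal_sum.
  apply sum_Rle. intros i Hi.
  destruct (grid_cell n i Hn Hi) as [_ [_ Hwidth]].
  rewrite Rmult_comm, <- Hwidth.
  apply RInt_le_const; auto.
  enough (0 < / INR n) by lra. apply Rinv_0_lt_compat, lt_0_INR. lia.
Qed.

Lemma sqr_sub_le_midpoint u p q c e : Rabs (u - p) <= e -> Rabs (u - q) <= e ->
  (u - c / 2) ^ 2 <= (p + q - c) ^ 2 / 2 + 2 * e ^ 2.
Proof.
  intros Hp Hq. apply Rabs_le_between in Hp, Hq.
  set (a := u - (p + q) / 2).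
  assert (Ha : a ^ 2 <= e ^ 2) by (apply pow_maj_Rabs, Rabs_le; unfold a; lra).
  assert (Hsplit : u - c / 2 = a + (p + q - c) / 2) by (unfold a; field).
  rewrite Hsplit.
  pose proof (pow2_ge_0 (a - (p + q - c) / 2)). nra.
Qed.

Lemma sqr_sub_le_shifted w d wb db E : 0 <= d <= E -> 0 <= db <= E ->
  (w - wb) ^ 2 / 2 <= (w + d - wb - db) ^ 2 + E ^ 2.
Proof.
  intros Hd Hdb.
  assert (Hshift : (d - db) ^ 2 <= E ^ 2) by (apply pow_maj_Rabs, Rabs_le; lra).
  pose proof (pow2_ge_0 (w + d - wb - db + (d - db))). nra.
Qed.

Lemma holder_cell_sqr_sub b M V n i x c : 0 < b -> 0 <= M -> holder b M V ->
  (1 <= n)%nat -> (i <= pred n)%nat -> INR i / INR n <= x <= INR (S i) / INR n ->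
  (V x - c / 2) ^ 2 <= (W_i n V i - c) ^ 2 / 2 + 2 * (M * Rpower (INR n) (- Rmin b 1)) ^ 2.
Proof.
  intros Hb HM HV Hn Hi Hx.
  destruct (grid_cell n i Hn Hi) as [Hlo [Hhi Hwidth]].
  pose proof (Rinv_0_lt_compat _ (lt_0_INR n ltac:(lia))).
  assert (Hmod := holder_grid_modulus b M V n Hb HM HV Hn).
  apply sqr_sub_le_midpoint; apply Hmod; try lra; apply Rabs_le; lra.
Qed.

Lemma holder_delta_i_sqr_bounds a M f n i : 0 < a -> 0 <= M -> holder a M f ->
  (1 <= n)%nat -> (i <= pred n)%nat ->
  0 <= delta_i n f i ^ 2 <= (M * Rpower (INR n) (- Rmin a 1)) ^ 2.
Proof.
  intros Ha HM Hf Hn Hi.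
  destruct (grid_cell n i Hn Hi) as [Hlo [Hhi Hwidth]].
  pose proof (Rinv_0_lt_compat _ (lt_0_INR n ltac:(lia))).
  split; [apply pow2_ge_0 |].
  apply pow_maj_Rabs, (holder_grid_modulus a M f n Ha HM Hf Hn); try lra.
  apply Rabs_le. lra.
Qed.

Lemma T_stat_ge0 n f V : (1 <= n)%nat -> 0 <= T_stat n f V.
Proof.
  intros Hn. unfold T_stat. rewrite <- (avg_const n 0 Hn).
  apply avg_le; [exact Hn |]. intros. apply pow2_ge_0.
Qed.

Lemma holder_RInt_sqr_sub_mean_le_avg b M V n c : 0 < b -> 0 < M -> holder b M V ->
  (1 <= n)%nat ->
  RInt (fun x => (V x - RInt V 0 1) ^ 2) 0 1
    <= avg n (fun i => (W_i n V i - c) ^ 2 / 2)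
       + 2 * M ^ 2 * Rpower (INR n) (- (2 * Rmin b 1)).
Proof.
  intros Hb HM HV Hn.
  rewrite (RInt_sqr_sub_mean_ext V (fun x => V (clamp01 x)))
    by (intros x Hx; now rewrite clamp01_id).
  assert (HVc := holder_clamp01_continuity b M V Hb HM HV).
  eapply Rle_trans; [exact (RInt_sqr_sub_mean_le _ (c / 2) HVc) |].
  replace (2 * M ^ 2 * Rpower (INR n) (- (2 * Rmin b 1)))
    with (2 * (M * Rpower (INR n) (- Rmin b 1)) ^ 2)
    by (rewrite mul_Rpower_opp_pow; simpl INR; ring_simplify (1 + 1); ring).
  rewrite <- avg_plus_const by exact Hn.
  apply RInt_le_avg; [now apply continuity_sqr_sub | exact Hn |].
  intros i x Hi Hx. destruct (grid_cell n i Hn Hi) as [Hlo [Hhi _]].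
  pose proof (Rinv_0_lt_compat _ (lt_0_INR n ltac:(lia))).
  rewrite clamp01_id by lra.
  apply holder_cell_sqr_sub; auto with real; lra.
Qed.

Lemma holder_avg_sqr_sub_mean_le_T_stat a M f V n : 0 < a -> 0 <= M -> holder a M f ->
  (1 <= n)%nat ->
  avg n (fun i => (W_i n V i - avg n (W_i n V)) ^ 2 / 2)
    <= T_stat n f V + M ^ 4 * Rpower (INR n) (- (4 * Rmin a 1)).
Proof.
  intros Ha HM Hf Hn.
  set (E := (M * Rpower (INR n) (- Rmin a 1)) ^ 2).
  assert (Hdelta := fun i => holder_delta_i_sqr_bounds a M f n i Ha HM Hf Hn).
  assert (Hmean : 0 <= avg n (fun i => delta_i n f i ^ 2) <= E)
    by (apply avg_bounds; auto).
  replace (M ^ 4 * Rpower (INR n) (- (4 * Rmin a 1))) with (E ^ 2).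
  - unfold T_stat. rewrite <- avg_plus_const by exact Hn.
    apply avg_le; [exact Hn |]. intros i Hi.
    exact (sqr_sub_le_shifted _ _ _ _ E (Hdelta i Hi) Hmean).
  - unfold E. rewrite <- pow_mult, mul_Rpower_opp_pow.
    replace (INR (2 * 2)) with 4 by (simpl; ring). reflexivity.
Qed.

Lemma Rplus_le_weighted_sum T Pb Pa M : 0 <= T -> 0 <= Pb -> 0 <= Pa ->
  T + 2 * M ^ 2 * Pb + M ^ 4 * Pa <= (1 + 2 * M ^ 2 + M ^ 4) * (T + Pb + Pa).
Proof.
  intros HT HPb HPa. pose proof (pow2_ge_0 M). pose proof (pow2_ge_0 (M ^ 2)).
  nra.
Qed.

Theorem proposition2p1 (alpha beta M : R) :
  0 < alpha -> 0 < beta -> 0 < M ->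
  exists C : R, 0 < C /\
    forall (n : nat) (f V : R -> R),
      (1 <= n)%nat -> holder alpha M f -> holder beta M V ->
      RInt (fun x => (V x - RInt V 0 1) ^ 2) 0 1
        <= C * (T_stat n f V
                + Rpower (INR n) (- (2 * Rmin beta 1))
                + Rpower (INR n) (- (4 * Rmin alpha 1))).
Proof.
  intros Ha Hb HM.
  exists (1 + 2 * M ^ 2 + M ^ 4).
  split; [pose proof (pow2_ge_0 M); pose proof (pow2_ge_0 (M ^ 2)); nra |].
  intros n f V Hn Hf HV.
  pose proof (holder_RInt_sqr_sub_mean_le_avg beta M V n (avg n (W_i n V)) Hb HM HV Hn)
    as Hcells.
  pose proof (holder_avg_sqr_sub_mean_le_T_stat alpha M f V n Ha (Rlt_le _ _ HM) Hf Hn)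
    as Hshift.
  eapply Rle_trans; [| apply Rplus_le_weighted_sum].
  - lra.
  - exact (T_stat_ge0 n f V Hn).
  - left. apply exp_pos.
  - left. apply exp_pos.
Qed.
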